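(* Let $A$ be a strongly AUF algebra, let $M\in\mathrm{Coh}_{\mathrm L}(A)$ be a projective generator of $\mathrm{Coh}_{\mathrm L}(A)$, and let $B=\mathrm{End}_{A,-}(M)^{\mathrm{op}}$, so that $M$ is an $A$-$B$ bimodule. Let $\psi\in\mathrm{SLF}(A)$ and let ${}^\psi\mathrm{Tr}\in\mathrm{SLF}(B)$ be the right pseudotrace associated to $\psi$ and $M$. Then $\psi$ is non-degenerate if and only if ${}^\psi\mathrm{Tr}$ is non-degenerate.
   Context: All algebras are associative $\mathbb C$-algebras, not necessarily unital. An idempotent is an element $e$ with $e^2=e$. An algebra $A$ is AUF if there is a family $(e_i)_{i\in\mathfrak I}$ of mutually orthogonal idempotents with $\dim e_iAe_j<\infty$ for all $i,j$ and $A=\sum_{i,j}e_iAe_j$. A left $A$-module $M$ is quasicoherent if $\xi\in A\xi$ for all $\xi\in M$, coherent if quasicoherent and finitely generated; $\mathrm{Coh}_{\mathrm L}(A)$ is the category of coherent left $A$-modules. Irreducible means nonzero with no nonzero proper submodules. An idempotent $e\in A$ is generating if every irreducible quasicoherent left $A$-module is a quotient of $Ae$; $A$ is strongly AUF if it is AUF and has a generating idempotent. A projective generator of $\mathrm{Coh}_{\mathrm L}(A)$ is an object that is projective as a left $A$-module and such that every object of $\mathrm{Coh}_{\mathrm L}(A)$ is a quotient of a finite direct sum of copies of it. $B=\mathrm{End}_{A,-}(M)^{\mathrm{op}}$ (left $A$-module endomorphisms, opposite multiplication) acts on the right of $M$ by $\xi\cdot T=T(\xi)$. $\mathrm{SLF}(C)$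 is the space of linear $\phi:C\to\mathbb C$ with $\phi(xy)=\phi(yx)$; such $\phi$ is non-degenerate if $\{x\in C:\phi(xy)=0\ \forall y\in C\}=0$. Right pseudotrace: choose an idempotent $e\in A$ and finitely many left $A$-module maps $\beta_j:Ae\to M$, $\check\beta^j:M\to Ae$ with $\sum_j\beta_j\circ\check\beta^j=\mathrm{id}_M$ (such exist); then ${}^\psi\mathrm{Tr}(y)=\sum_j\psi\big(\check\beta^j(\beta_j(e)y)\big)$ for $y\in B$, which is independent of the choices and lies in $\mathrm{SLF}(B)$. *)

From HB Require Import structures.
From mathcomp Require Import all_boot all_order all_algebra.
From mathcomp Require Import complex Rstruct.

Set Implicit Arguments.
Unset Strict Implicit.
Unset Printing Implicit Defensive.

Import Order.TTheory GRing.Theory Num.Theory.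
Local Open Scope ring_scope.

Definition C : numClosedFieldType := (Rdefinitions.R)[i].

Record nuAlg := NuAlg {
  alg_car :> lmodType C;
  amul : alg_car -> alg_car -> alg_car;
  amulA : forall x y z, amul x (amul y z) = amul (amul x y) z;
  amul_linl : forall (c : C) x y z, amul (c *: x + y) z = c *: amul x z + amul y z;
  amul_linr : forall (c : C) x y z, amul x (c *: y + z) = c *: amul x y + amul x z
}.

Record lmodule (A : nuAlg) := LModule {
  mod_car :> lmodType C;
  act : A -> mod_car -> mod_car;
  actA : forall (a b : A) m, act (amul a b) m = act a (act b m);
  act_linl : forall (c : C) (a b : A) m, act (c *: a + b) m = c *: act a m + act b m;
  act_linr : forall (c : C) (a : A) m n, act a (c *: m + n) = c *: act a m + act a n
}.

Section Defs.
Variable A : nuAlg.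

Definition idempotent (e : A) : Prop := amul e e = e.

Definition clinear (V W : lmodType C) (f : V -> W) : Prop :=
  forall (c : C) x y, f (c *: x + y) = c *: f x + f y.

Definition modmap (M N : lmodule A) (f : M -> N) : Prop :=
  clinear f /\ forall (a : A) m, f (act a m) = act a (f m).

Definition submodule (M : lmodule A) (P : M -> Prop) : Prop :=
  [/\ P 0,
      forall (c : C) x y, P x -> P y -> P (c *: x + y)
    & forall (a : A) x, P x -> P (act a x)].

Definition quasicoherent (M : lmodule A) : Prop :=
  forall xi : M, exists a : A, act a xi = xi.

Definition fin_generated (M : lmodule A) : Prop :=
  exists (n : nat) (g : 'I_n -> M),
    forall xi : M, forall P : M -> Prop,
      submodule P -> (forall k, P (g k)) -> P xi.

Definition coherent (M : lmodule A) : Prop :=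
  quasicoherent M /\ fin_generated M.

Definition irreducible (M : lmodule A) : Prop :=
  (exists xi : M, xi <> 0) /\
  forall P : M -> Prop, submodule P ->
    (forall x, P x -> x = 0) \/ (forall x, P x).

Definition inAe (e : A) (x : A) : Prop := exists a : A, x = amul a e.

(* A left A-module map  A e -> N, represented by a function on A whose values
   outside A e are irrelevant. *)
Definition modmap_from_Ae (e : A) (N : lmodule A) (g : A -> N) : Prop :=
  (forall (c : C) x y, inAe e x -> inAe e y -> g (c *: x + y) = c *: g x + g y) /\
  (forall (a : A) x, inAe e x -> g (amul a x) = act a (g x)).

Definition modmap_to_Ae (e : A) (N : lmodule A) (h : N -> A) : Prop :=
  (forall m, inAe e (h m)) /\ clinear h /\
  (forall (a : A) m, h (act a m) = amul a (h m)).

Definition quotient_of_Ae (e : A) (N : lmodule A) : Prop :=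
  exists g : A -> N, modmap_from_Ae e g /\
    forall y : N, exists2 x, inAe e x & g x = y.

Definition AUF : Prop :=
  exists (I : Type) (E : I -> A),
    [/\ (forall i, idempotent (E i)),
        (forall i j, i <> j -> amul (E i) (E j) = 0),
        (* dim e_i A e_j < oo : spanned by finitely many of its elements *)
        (forall i j, exists (n : nat) (v : 'I_n -> A),
            (forall k, exists a, v k = amul (amul (E i) a) (E j)) /\
            forall a : A, exists c : 'I_n -> C,
              amul (amul (E i) a) (E j) = \sum_(k < n) c k *: v k)
      &
        forall a : A, exists (n : nat) (p : 'I_n -> I * I) (x : 'I_n -> A),
          a = \sum_(k < n) amul (amul (E (p k).1) (x k)) (E (p k).2)].

Definition generating_idempotent (e : A) : Prop :=
  idempotent e /\
  forall N : lmodule A, irreducible N -> quasicoherent N -> quotient_of_Ae e N.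

Definition strongly_AUF : Prop := AUF /\ exists e : A, generating_idempotent e.

Definition projective (M : lmodule A) : Prop :=
  forall (N N' : lmodule A) (p : N -> N') (f : M -> N'),
    modmap p -> (forall y : N', exists x, p x = y) -> modmap f ->
    exists g : M -> N, modmap g /\ forall m, p (g m) = f m.

(* N is a quotient of a finite direct sum M^n, i.e. there are module maps
   f_1..f_n : M -> N with (x_k)_k |-> sum_k f_k x_k surjective *)
Definition quotient_of_fin_sum (M N : lmodule A) : Prop :=
  exists (n : nat) (f : 'I_n -> M -> N), (forall k, modmap (f k)) /\
    forall y : N, exists x : 'I_n -> M, y = \sum_(k < n) f k (x k).

Definition projective_generator_Coh (M : lmodule A) : Prop :=
  [/\ coherent M, projective M &
      forall N : lmodule A, coherent N -> quotient_of_fin_sum M N].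

Definition SLF_A (psi : A -> C) : Prop :=
  clinear (psi : A -> C^o) /\ forall x y, psi (amul x y) = psi (amul y x).

Definition nondegenerate_A (psi : A -> C) : Prop :=
  forall x : A, (forall y : A, psi (amul x y) = 0) -> x = 0.

(* elements of B are the module endomorphisms of M; the product of B is
   the opposite of composition:  y *_B z = z \o y  *)
Definition Bmul (M : lmodule A) (y z : M -> M) : M -> M := fun xi => z (y xi).

Definition nondegenerate_B (M : lmodule A) (T : (M -> M) -> C) : Prop :=
  forall y : M -> M, modmap y ->
    (forall z : M -> M, modmap z -> T (Bmul y z) = 0) ->
    forall xi, y xi = 0.

(* data for the right pseudotrace: an idempotent e and module maps
   beta_j : A e -> M, betac_j : M -> A e with sum_j beta_j o betac_j = id_M *)
Definition pseudotrace_data (M : lmodule A) (e : A) (n : nat)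
    (beta : 'I_n -> A -> M) (betac : 'I_n -> M -> A) : Prop :=
  [/\ idempotent e,
      (forall j, modmap_from_Ae e (beta j)),
      (forall j, modmap_to_Ae e (betac j))
    & forall xi : M, \sum_(j < n) beta j (betac j xi) = xi].

(* ^psi Tr (y) = sum_j psi (betac_j (beta_j(e) . y)),  where xi . y = y xi *)
Definition right_pseudotrace (psi : A -> C) (M : lmodule A) (e : A) (n : nat)
    (beta : 'I_n -> A -> M) (betac : 'I_n -> M -> A) (y : M -> M) : C :=
  \sum_(j < n) psi (betac j (y (beta j e))).

End Defs.

(* psi nondegenerate => Tr nondegenerate: for b in A, the endomorphism
   xi |-> beta_j (betac_k xi * b * e) of M pairs with y under Tr to
   psi (betac_k (y (beta_j e)) * b), so nondegeneracy of psi kills every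
   coordinate betac_k (y (beta_j e)) of y, hence y.

   Tr nondegenerate => psi nondegenerate: let psi (x A) = 0 and let u be a local
   unit of x, which exists since A is AUF.  The left ideal A u is coherent, so
   u = sum_l f_l m_l for module maps f_l : M -> A u.  For any module map
   h : M -> A, the endomorphism xi |-> (h xi * x) . m is Tr-orthogonal to B, since
   by the symmetry of psi each term of its trace is psi (x * _); so it vanishes.
   Hence f_l m_l * x = f_l m_l * x * u = sum_k f_k ((f_l m_l * x) . m_k) = 0, and
   x = u x = 0. *)

From Pilot Require Import Defs.
From HB Require Import structures.
From mathcomp Require Import all_boot all_order all_algebra.
From mathcomp Require Import complex Rstruct.
From Stdlib Require Import Classical.
(* Re-imported so that [idempotent] denotes [Defs.idempotent], not ssrfun's. *)
Import Defs.

Set Implicit Arguments.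
Unset Strict Implicit.
Unset Printing Implicit Defensive.

Import GRing.Theory.
Local Open Scope ring_scope.

Section ClinearTheory.
Variables (V W : lmodType C) (f : V -> W).
Hypothesis f_lin : clinear f.

Lemma clinear0 : f 0 = 0.
Proof.
have := f_lin 1 0 0; rewrite !scale1r !addr0 => /eqP.
by rewrite -subr_eq addrN => /eqP <-.
Qed.

Lemma clinearD x y : f (x + y) = f x + f y.
Proof. by have := f_lin 1 x y; rewrite !scale1r. Qed.

Lemma clinear_sum n (g : 'I_n -> V) : f (\sum_(k < n) g k) = \sum_(k < n) f (g k).
Proof. exact: (big_morph f clinearD clinear0). Qed.

End ClinearTheory.

Section NuAlgTheory.
Variable A : nuAlg.

Lemma amull_clinear (z : A) : clinear (fun x : A => amul x z).
Proof. by move=> c x y; apply: amul_linl. Qed.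

Lemma amulr_clinear (x : A) : clinear (amul x).
Proof. by move=> c y z; apply: amul_linr. Qed.

Lemma amul0r (x : A) : amul 0 x = 0.
Proof. exact: clinear0 (amull_clinear x). Qed.

Lemma amulr0 (x : A) : amul x 0 = 0.
Proof. exact: clinear0 (amulr_clinear x). Qed.

Lemma amulDl (x y z : A) : amul (x + y) z = amul x z + amul y z.
Proof. exact: clinearD (amull_clinear z) x y. Qed.

Lemma amulDr (x y z : A) : amul x (y + z) = amul x y + amul x z.
Proof. exact: clinearD (amulr_clinear x) y z. Qed.

Lemma amul_suml n (g : 'I_n -> A) (z : A) :
  amul (\sum_(k < n) g k) z = \sum_(k < n) amul (g k) z.
Proof. exact (clinear_sum (amull_clinear z) g). Qed.

Lemma amul_sumr n (x : A) (g : 'I_n -> A) :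
  amul x (\sum_(k < n) g k) = \sum_(k < n) amul x (g k).
Proof. exact (clinear_sum (amulr_clinear x) g). Qed.

Lemma act0r (M : lmodule A) (m : M) : act 0 m = 0.
Proof. exact: clinear0 (fun c a b => act_linl c a b m). Qed.

Lemma actr0 (M : lmodule A) (a : A) : act a (0 : M) = 0.
Proof. exact: clinear0 (fun c x y => act_linr c a x y). Qed.

Definition local_unit (u a : A) : Prop := amul u a = a /\ amul a u = a.

Lemma local_unit0 (u : A) : local_unit u 0.
Proof. by split; rewrite ?amul0r ?amulr0. Qed.

Lemma local_unitD (u a b : A) :
  local_unit u a -> local_unit u b -> local_unit u (a + b).
Proof. by move=> [ua au] [ub bu]; split; rewrite ?amulDl ?amulDr ?ua ?au ?ub ?bu. Qed.

End NuAlgTheory.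

Section LocalUnits.
Variables (A : nuAlg) (I : Type) (E : I -> A).
Hypotheses (E_idem : forall i, idempotent (E i))
  (E_orth : forall i j, i <> j -> amul (E i) (E j) = 0).

(* Abstracts the finite sums of distinct [E i]. *)
Definition partial_unit (u : A) : Prop :=
  idempotent u /\ forall i, local_unit u (E i) \/ amul u (E i) = 0 /\ amul (E i) u = 0.

Lemma partial_unit0 : partial_unit 0.
Proof. by split=> [|i]; [apply: amul0r | right; rewrite amul0r amulr0]. Qed.

Lemma partial_unit_extend u i : partial_unit u ->
  exists u', [/\ partial_unit u', local_unit u' (E i)
               & forall a, local_unit u a -> local_unit u' a].
Proof.
move=> [uu u_E]; case: (u_E i) => [ui|[uEi Eiu]]; first by exists u; split.
have Eii := E_idem i.
exists (u + E i); split.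
- split; first by rewrite /idempotent amulDl !amulDr uu uEi Eiu Eii addr0 add0r.
  move=> k; have [->|ki] := classic (k = i).
    by left; split; rewrite ?amulDl ?amulDr ?uEi ?Eiu Eii add0r.
  have Eik := E_orth (nesym ki); have Eki := E_orth ki.
  by rewrite /local_unit !amulDl !amulDr Eik Eki !addr0; apply: u_E.
- by split; rewrite ?amulDl ?amulDr ?uEi ?Eiu Eii add0r.
- move=> a [ua au]; split.
    by rewrite amulDl -{2}ua amulA Eiu amul0r !addr0.
  by rewrite amulDr -{2}au -amulA uEi amulr0 !addr0.
Qed.

Lemma partial_unit_corner_sum n (p : 'I_n -> I * I) (x : 'I_n -> A) :
  exists u, partial_unit u /\
    local_unit u (\sum_(k < n) amul (amul (E (p k).1) (x k)) (E (p k).2)).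
Proof.
elim: n p x => [|n IHn] p x.
  by exists 0; rewrite big_ord0; split; [apply: partial_unit0 | apply: local_unit0].
rewrite big_ord_recr /=.
have [u [u_pu u_sum]] := IHn (p \o widen_ord (leqnSn n)) (x \o widen_ord (leqnSn n)).
have [u1 [u1_pu u1_E u1_ext]] := partial_unit_extend (p ord_max).1 u_pu.
have [u2 [u2_pu [_ E_u2] u2_ext]] := partial_unit_extend (p ord_max).2 u1_pu.
exists u2; split=> //; apply: local_unitD; first exact/u2_ext/u1_ext.
have [u2_E _] := u2_ext _ u1_E.
by split; rewrite -?amulA ?E_u2 // !amulA u2_E.
Qed.

End LocalUnits.

Lemma AUF_local_unit (A : nuAlg) : AUF A ->
  forall a : A, exists2 u, idempotent u & local_unit u a.
Proof.
move=> [I [E [E_idem E_orth _ E_span]]] a.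
have [n [p [x ->]]] := E_span a.
have [u [[uu _] u_a]] := partial_unit_corner_sum E_idem E_orth p x.
by exists u.
Qed.

Section LeftIdeal.
Variables (A : nuAlg) (u : A).

(* For idempotent [u] this is the left ideal [A u]. *)
Definition lideal : {pred A} := fun x => amul x u == x.

Lemma lideal_submod_closed : submod_closed lideal.
Proof.
split=> [|c x y]; rewrite !unfold_in /lideal /=; first by rewrite amul0r.
by move=> /eqP xu /eqP yu; rewrite amul_linl xu yu.
Qed.

HB.instance Definition _ := GRing.isSubmodClosed.Build C A lideal lideal_submod_closed.

Record lideal_elt := LidealElt { lideal_val :> A; lideal_valP : lideal_val \in lideal }.
HB.instance Definition _ := [isSub for lideal_val].
HB.instance Definition _ := [Choice of lideal_elt by <:].
HB.instance Definition _ := [SubChoice_isSubLmodule of lideal_elt by <:].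

Lemma lideal_act_subproof (a : A) (x : lideal_elt) : amul a x \in lideal.
Proof. by rewrite unfold_in /lideal /= -amulA (eqP (lideal_valP x)). Qed.

Definition lideal_act (a : A) (x : lideal_elt) := LidealElt (lideal_act_subproof a x).

Lemma lideal_actA (a b : A) x : lideal_act (amul a b) x = lideal_act a (lideal_act b x).
Proof. by apply: val_inj; rewrite /= amulA. Qed.

Lemma lideal_act_linl (c : C) (a b : A) x :
  lideal_act (c *: a + b) x = c *: lideal_act a x + lideal_act b x.
Proof. by apply: val_inj; rewrite /= amul_linl. Qed.

Lemma lideal_act_linr (c : C) (a : A) x y :
  lideal_act a (c *: x + y) = c *: lideal_act a x + lideal_act a y.
Proof. by apply: val_inj; rewrite /= amul_linr. Qed.

Definition lideal_lmodule : lmodule A :=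
  LModule lideal_actA lideal_act_linl lideal_act_linr.

Lemma lideal_val_modmap (N : lmodule A) (f : N -> lideal_lmodule) : modmap f ->
  clinear (fun xi => f xi : A) /\ forall a xi, (f (act a xi) : A) = amul a (f xi).
Proof. by move=> [f_lin f_act]; split=> [c x y|a xi]; rewrite ?f_lin ?f_act. Qed.

Hypothesis u_idem : idempotent u.

Definition lideal_gen : lideal_lmodule := LidealElt (introT eqP u_idem : u \in lideal).

Lemma lideal_coherent : AUF A -> coherent lideal_lmodule.
Proof.
move=> A_AUF; split.
  move=> x; have [v _ [vx _]] := AUF_local_unit A_AUF x.
  by exists v; apply: val_inj.
exists 1%N, (fun _ => lideal_gen) => x P [_ _ P_act] P_gen.
have -> : x = act (x : A) lideal_gen by apply: val_inj; rewrite /= (eqP (lideal_valP x)).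
exact/P_act/(P_gen ord0).
Qed.

End LeftIdeal.

Section Pseudotrace.
Variables (A : nuAlg) (M : lmodule A) (psi : A -> C) (e : A) (n : nat)
  (beta : 'I_n -> A -> M) (betac : 'I_n -> M -> A).
Hypotheses (psi_lin : clinear (psi : A -> C^o))
  (psi_sym : forall x y, psi (amul x y) = psi (amul y x))
  (e_idem : idempotent e) (beta_mod : forall j, modmap_from_Ae e (beta j))
  (betac_mod : forall j, modmap_to_Ae e (betac j))
  (beta_betac : forall xi, \sum_(j < n) beta j (betac j xi) = xi).

Local Notation Tr := (right_pseudotrace psi e beta betac).

Lemma inAe_mule (a : A) : inAe e (amul a e).
Proof. by exists a. Qed.

Lemma beta_mule j (a : A) : beta j (amul a e) = act a (beta j e).
Proof. by apply: (beta_mod j).2; exists e. Qed.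

Lemma betac_mule j xi : amul (betac j xi) e = betac j xi.
Proof. by have [a ->] := (betac_mod j).1 xi; rewrite -amulA e_idem. Qed.

Lemma betac_act j (a : A) xi : betac j (act a xi) = amul a (betac j xi).
Proof. exact: (betac_mod j).2.2. Qed.

Lemma sum_act_betac_beta xi : \sum_(j < n) act (betac j xi) (beta j e) = xi.
Proof.
rewrite -[RHS]beta_betac; apply: eq_bigr => j _.
by rewrite -beta_mule betac_mule.
Qed.

Lemma modmap_sum_act (y : M -> M) xi : modmap y ->
  y xi = \sum_(j < n) act (betac j xi) (y (beta j e)).
Proof.
move=> [y_lin y_act]; rewrite -{1}(sum_act_betac_beta xi) (clinear_sum y_lin).
by apply: eq_bigr => j _; rewrite y_act.
Qed.

Definition endo_unit j k (b : A) : M -> M :=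
  fun xi => beta j (amul (amul (betac k xi) b) e).

Lemma modmap_endo_unit j k b : modmap (endo_unit j k b).
Proof.
split=> [c x1 x2|a xi]; rewrite /endo_unit.
  by rewrite (betac_mod k).2.1 !amul_linl; apply: (beta_mod j).1; apply: inAe_mule.
by rewrite betac_act !beta_mule -actA !amulA.
Qed.

Lemma pseudotrace_endo_unit (y : M -> M) j k b : modmap y ->
  Tr (Bmul y (endo_unit j k b)) = psi (amul (betac k (y (beta j e))) b).
Proof.
move=> y_mod; rewrite /right_pseudotrace /Bmul /endo_unit.
have -> : betac k (y (beta j e)) =
          \sum_(i < n) amul (betac i (beta j e)) (betac k (y (beta i e))).
  rewrite {1}(modmap_sum_act _ y_mod) (clinear_sum (betac_mod k).2.1).
  by apply: eq_bigr => i _; rewrite betac_act.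
rewrite amul_suml (clinear_sum psi_lin); apply: eq_bigr => i _.
by rewrite beta_mule betac_act psi_sym amulA.
Qed.

Lemma nondegenerate_pseudotrace : nondegenerate_A psi -> nondegenerate_B Tr.
Proof.
move=> psi_nd y y_mod y_perp.
have betac_y_beta j k : betac k (y (beta j e)) = 0.
  apply: psi_nd => b; rewrite -pseudotrace_endo_unit //.
  exact/y_perp/modmap_endo_unit.
have y_beta j : y (beta j e) = 0.
  rewrite -[y _]sum_act_betac_beta; apply: big1 => k _.
  by rewrite betac_y_beta act0r.
move=> xi; rewrite (modmap_sum_act _ y_mod); apply: big1 => j _.
by rewrite y_beta actr0.
Qed.

Definition rank_one (h : M -> A) (x : A) (m : M) : M -> M :=
  fun xi => act (amul (h xi) x) m.

Section RankOne.
Variables (h : M -> A) (x : A) (m : M).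
Hypotheses (h_lin : clinear h) (h_act : forall a xi, h (act a xi) = amul a (h xi)).

Lemma modmap_rank_one : modmap (rank_one h x m).
Proof.
split=> [c x1 x2|a xi]; rewrite /rank_one.
  by rewrite h_lin !amul_linl act_linl.
by rewrite h_act -actA !amulA.
Qed.

Lemma rank_one_eq0 : nondegenerate_B Tr ->
  (forall y, psi (amul x y) = 0) -> forall xi, rank_one h x m xi = 0.
Proof.
move=> Tr_nd x_perp; apply: Tr_nd => [|z z_mod]; first exact: modmap_rank_one.
rewrite /right_pseudotrace /Bmul /rank_one; apply: big1 => j _.
by rewrite z_mod.2 betac_act -amulA psi_sym -amulA x_perp.
Qed.

End RankOne.

Lemma nondegenerate_of_pseudotrace : AUF A ->
  (forall N : lmodule A, coherent N -> quotient_of_fin_sum M N) ->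
  nondegenerate_B Tr -> nondegenerate_A psi.
Proof.
move=> A_AUF M_gen Tr_nd x x_perp.
have [u u_idem [ux xu]] := AUF_local_unit A_AUF x.
have [p [f [f_mod f_onto]]] := M_gen _ (lideal_coherent u_idem A_AUF).
have [mu mu_sum] := f_onto (lideal_gen u_idem).
have u_sum : u = \sum_(k < p) val (f k (mu k)).
  by rewrite -raddf_sum -mu_sum.
have f_x l : amul (f l (mu l) : A) x = 0.
  have [fl_lin fl_act] := lideal_val_modmap (f_mod l).
  set w := amul _ x; have -> : w = amul w u by rewrite /w -amulA xu.
  rewrite u_sum amul_sumr big1 // => k _.
  have [fk_lin fk_act] := lideal_val_modmap (f_mod k).
  have w_mu : act w (mu k) = 0 :=
    rank_one_eq0 (mu k) fl_lin fl_act Tr_nd x_perp (mu l).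
  by rewrite -fk_act w_mu; apply: clinear0 fk_lin.
by rewrite -ux u_sum amul_suml; apply: big1 => l _; apply: f_x.
Qed.

End Pseudotrace.

Theorem theorem10p4 (A : nuAlg) (M : lmodule A) (psi : A -> C)
  (hA : strongly_AUF A) (hM : projective_generator_Coh M) (hpsi : SLF_A psi)
  (e : A) (n : nat) (beta : 'I_n -> A -> M) (betac : 'I_n -> M -> A)
  (hdata : pseudotrace_data e beta betac) :
  nondegenerate_A psi <-> nondegenerate_B (right_pseudotrace psi e beta betac).
Proof.
have [psi_lin psi_sym] := hpsi.
have [e_idem beta_mod betac_mod beta_betac] := hdata.
have [[A_AUF _] [_ _ M_gen]] := (hA, hM).
split.
  exact: nondegenerate_pseudotrace psi_lin psi_sym e_idem beta_mod betac_mod beta_betac.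
exact: nondegenerate_of_pseudotrace psi_sym betac_mod A_AUF M_gen.
Qed.
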